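(* Let $G$ be a bipartite graph with bipartition $(X,Y)$, $|X| = n\geq 2$, $|Y|=m$, every $x\in X$ having degree at least $\delta$. Let $(C,x)$ be a tight pair in $G$, with $C = y_1x_1y_2x_2\ldots y_\ell x_\ell y_1$ where $x_i \in X$, $y_i\in Y$. If $i \neq j$ and $y_i, y_j \in N(x)$, then $N(x_i)\setminus V(C)$ and $N(x_j)\setminus V(C)$ are disjoint.
   Context: A tight pair in $G$ is a pair $(C,x)$ where $C$ is a longest cycle in $G$ and $x \in X \setminus V(C)$, chosen such that $|N(x)\cap V(C)|$ is maximum over all pairs $(C',x')$ with $C'$ a longest cycle in $G$ and $x' \in X\setminus V(C')$. *)

From mathcomp Require Import all_boot.
Set Implicit Arguments. Unset Strict Implicit. Unset Printing Implicit Defensive.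

Section Graphs.
Variable T : finType.
Variable e : rel T.

Definition simple_graph : Prop := symmetric e /\ irreflexive e.

Definition bipartition (X Y : {set T}) : Prop :=
  [/\ X :&: Y = set0, X :|: Y = [set: T] &
      forall u v, e u v -> (u \in X) && (v \in Y) || (u \in Y) && (v \in X)].

Definition N (v : T) : {set T} := [set u | e v u].

Definition VC (c : seq T) : {set T} := [set u | u \in c].

Definition is_cycle (c : seq T) : bool :=
  [&& uniq c, cycle e c & 3 <= size c].

Definition longest_cycle (c : seq T) : Prop :=
  is_cycle c /\ forall c', is_cycle c' -> size c' <= size c.

Definition tight_pair (X : {set T}) (C : seq T) (x : T) : Prop :=
  [/\ longest_cycle C, x \in X, x \notin VC C &
      forall C' x', longest_cycle C' -> x' \in X -> x' \notin VC C' ->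
        #|N x' :&: VC C'| <= #|N x :&: VC C| ].

End Graphs.

From mathcomp Require Import all_boot.
From mathcomp Require Import zify.

(* If w, outside C, were adjacent to both x_i and x_j with i < j, then
   w x_i y_(i+1) ... y_j x y_i x_(i-1) ... x_j w (go forward along C from x_i
   to y_j, detour through x, go backward from y_i to x_j) would be a cycle
   two vertices longer than C.  Bipartiteness only serves to show w <> x. *)

Set Implicit Arguments.
Unset Strict Implicit.
Unset Printing Implicit Defensive.

Section Rotation.
Variables (T : eqType) (x0 : T).

Lemma rot_split_at (s : seq T) (a b : nat) : a < b -> b.+1 < size s ->
  exists p1 p2, [/\ rot a.+1 s = p1 ++ p2, p1 != [::], p2 != [::],
    head x0 p1 = nth x0 s a.+1 /\ last x0 p1 = nth x0 s b &
    head x0 p2 = nth x0 s b.+1 /\ last x0 p2 = nth x0 s a].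
Proof.
move=> lt_ab lt_bs; have lt_as : a < size s by lia.
have size_take_b : size (take b s) = b by rewrite size_take (ltnW lt_bs).
set p1 := drop a.+1 (take b.+1 s); set p2 := drop b.+1 s ++ take a.+1 s.
have p1_cons : p1 = nth x0 s a.+1 :: drop a.+2 (take b.+1 s).
  by rewrite /p1 (drop_nth x0) ?nth_take // size_take lt_bs.
have p1_rcons : p1 = rcons (drop a.+1 (take b s)) (nth x0 s b).
  by rewrite /p1 (take_nth x0) ?drop_rcons ?size_take_b //; lia.
have p2_cons : p2 = nth x0 s b.+1 :: drop b.+2 s ++ take a.+1 s.
  by rewrite /p2 (drop_nth x0).
have p2_rcons : p2 = rcons (drop b.+1 s ++ take a s) (nth x0 s a).
  by rewrite /p2 (take_nth x0) // rcons_cat.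
exists p1, p2; split.
- rewrite /rot -{1}(cat_take_drop b.+1 s) drop_cat size_take lt_bs ifT //.
  by rewrite -catA.
- by rewrite p1_cons.
- by rewrite p2_cons.
- by rewrite {1}p1_cons p1_rcons last_rcons.
- by rewrite {1}p2_cons p2_rcons last_rcons.
Qed.

End Rotation.

Section Detour.
Variables (T : eqType) (e : rel T) (x0 : T).
Hypothesis e_sym : symmetric e.

Lemma rev_path_sym (x : T) (p : seq T) :
  path e (last x p) (rev (belast x p)) = path e x p.
Proof. by rewrite rev_path; apply: eq_path => u v; rewrite e_sym. Qed.

Lemma cycle_detour (p1 p2 : seq T) (z x : T) : p1 != [::] -> p2 != [::] ->
  cycle e (p1 ++ p2) ->
  e z (head x0 p1) -> e (last x0 p1) x -> e x (last x0 p2) -> e (head x0 p2) z ->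
  cycle e (z :: p1 ++ x :: rev p2).
Proof.
case: p1 => [//|u1 s1] _; case: p2 => [//|u2 s2] _.
rewrite /= rcons_path cat_path /= => /andP[/and3P[path_s1 _ path_s2] _].
move=> e_z_u1 e_s1_x e_x_s2 e_u2_z.
rewrite e_z_u1 rcons_path cat_path path_s1 last_cat /= e_s1_x.
rewrite rev_cons last_rcons e_u2_z -rev_cons (lastI u2) rev_rcons /=.
by rewrite e_x_s2 rev_path_sym path_s2.
Qed.

Lemma uniq_detour (p1 p2 : seq T) (z x : T) : uniq (p1 ++ p2) ->
  z \notin p1 ++ p2 -> x \notin p1 ++ p2 -> z != x ->
  uniq (z :: p1 ++ x :: rev p2).
Proof.
have perm_detour : perm_eq (z :: p1 ++ x :: rev p2) (z :: x :: p1 ++ p2).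
  by rewrite perm_cons -cat1s perm_catCA /= perm_cons perm_cat2l perm_rev.
by rewrite (perm_uniq perm_detour) /= inE negb_or => -> -> -> ->.
Qed.

End Detour.

Section LongestCycle.
Variables (T : finType) (e : rel T) (x0 : T).
Hypothesis e_sym : symmetric e.

Lemma longest_cycle_no_detour (c : seq T) (a b : nat) (z x : T) :
  longest_cycle e c -> a < b -> b.+1 < size c ->
  z \notin c -> x \notin c -> z != x ->
  e x (nth x0 c a) -> e x (nth x0 c b) ->
  e (nth x0 c a.+1) z -> ~~ e (nth x0 c b.+1) z.
Proof.
case=> /and3P[uniq_c cycle_c _] c_longest lt_ab lt_bc zc xc zx e_xa e_xb e_za.
apply/negP => e_zb.
have [p1 [p2 [rot_c p1_nil p2_nil [hd1 lst1] [hd2 lst2]]]] :=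
  rot_split_at x0 lt_ab lt_bc.
have size_detour : size (z :: p1 ++ x :: rev p2) = (size c).+2.
  by rewrite -(size_rot a.+1 c) rot_c /= !size_cat /= size_rev addnS.
have detour : is_cycle e (z :: p1 ++ x :: rev p2).
  apply/and3P; split.
  - by apply: uniq_detour; rewrite -?rot_c ?rot_uniq ?mem_rot.
  - apply: (cycle_detour (x0 := x0) e_sym);
      by rewrite -?rot_c ?rot_cycle ?hd1 ?lst1 ?hd2 ?lst2 // e_sym.
  - by rewrite size_detour; lia.
by have := c_longest _ detour; rewrite size_detour; lia.
Qed.
End LongestCycle.

Section Bipartite.
Variables (T : finType) (e : rel T) (X Y : {set T}).
Hypothesis bip : bipartition e X Y.

Lemma bipartition_notin_Y (v : T) : v \notin Y -> v \in X.
Proof.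
case: bip => _ XUY _ vY.
by have := in_setT v; rewrite -XUY in_setU (negbTE vY) orbF.
Qed.

Lemma bipartition_disjoint (u v : T) : u \in X -> v \in Y -> u != v.
Proof.
case: bip => XIY _ _ uX vY; apply/eqP => eq_uv.
by have := in_set0 v; rewrite -XIY in_setI vY -eq_uv uX.
Qed.

Lemma bipartition_edge_X (u v : T) : u \in X -> e u v -> v \in Y.
Proof.
case: bip => _ _ edges uX /edges; rewrite uX /= => /orP[// | /andP[uY _]].
by have := bipartition_disjoint uX uY; rewrite eqxx.
Qed.

End Bipartite.

(* C = y_1 x_1 y_2 x_2 ... y_l x_l is the sequence C; with 0-based
   indices, y_(i+1) = nth x C (2*i) and x_(i+1) = nth x C (2*i+1),
   for i < l = size C / 2. *)
Theorem claim2 (T : finType) (e : rel T) (X Y : {set T}) (n m delta : nat)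
  (Hsimple : simple_graph e) (Hbip : bipartition e X Y)
  (Hn : #|X| = n) (Hn2 : 2 <= n) (Hm : #|Y| = m)
  (Hdeg : forall v, v \in X -> delta <= #|N e v|)
  (C : seq T) (x : T) (Htight : tight_pair e X C x)
  (Halt : forall k, k < size C -> (nth x C k \in Y) = ~~ odd k)
  (i j : nat) (Hi : i < size C %/ 2) (Hj : j < size C %/ 2) (Hij : i != j)
  (Hyi : nth x C (2 * i) \in N e x) (Hyj : nth x C (2 * j) \in N e x) :
  [disjoint (N e (nth x C (2 * i).+1) :\: VC C)
          & (N e (nth x C (2 * j).+1) :\: VC C)].
Proof.
case: Hsimple => e_sym _; case: Htight => C_longest xX xC _.
wlog lt_ij : i j Hi Hj Hij Hyi Hyj / i < j => [sym_ij|].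
  case: (ltngtP i j) (Hij) => [lt_ij _ | lt_ji _ | //].
  - exact: sym_ij.
  - by rewrite disjoint_sym; apply: sym_ij; rewrite // neq_ltn lt_ji.
rewrite -setI_eq0; apply/set0Pn => -[w]; rewrite !inE.
case/and3P=> /andP[wC e_xi_w] _ e_xj_w.
have lt_jC : (2 * j).+1 < size C by lia.
have xjX : nth x C (2 * j).+1 \in X.
  by apply: (bipartition_notin_Y Hbip); rewrite Halt //= oddM.
have wx : w != x.
  by rewrite eq_sym (bipartition_disjoint Hbip xX) ?(bipartition_edge_X Hbip xjX).
rewrite !inE in Hyi Hyj xC.
have lt_ij2 : 2 * i < 2 * j by lia.
have := longest_cycle_no_detour e_sym C_longest lt_ij2 lt_jC wC xC wx Hyi Hyj.
by move=> /(_ e_xi_w); rewrite e_xj_w.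
Qed.
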